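(* Let $\mathcal{S}\subseteq \mathsf{mod}\Lambda$ be a Serre subcategory. Then $\mathcal{S}$ is both a left finite wide subcategory and a right finite wide subcategory.
   Context: $\Lambda$ is a basic finite-dimensional algebra over a field, $\mathsf{mod}\Lambda$ finitely generated left modules. A Serre subcategory is closed under extensions, submodules and quotients. A wide subcategory is closed under extensions, kernels, cokernels. For a torsion class $\mathcal T$ (closed under extensions and quotients), $\mathcal W_L(\mathcal T)=\{X\in\mathcal T\mid\forall Y\in\mathcal T, f:Y\to X:\ \ker f\in\mathcal T\}$; for a torsion-free class $\mathcal F$ (closed under extensions and submodules), $\mathcal W_R(\mathcal F)=\{X\in\mathcal F\mid\forall Y\in\mathcal F, f:X\to Y:\ \mathrm{coker} f\in\mathcal F\}$. A wide subcategory is left finite (resp. right finite) if it equals $\mathcal W_L(\mathcal T)$ for a functorially finite torsion class $\mathcal T$ (resp. $\mathcal W_R(\mathcal F)$ for a functorially finite torsion-free class $\mathcal F$); functorially finite means every module has left and right approximations by the subcategory. *)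

(* Finite-dimensional modules over a finite-dimensional
   algebra, encoded as matrix representations (row-vector convention). *)
From HB Require Import structures.
From mathcomp Require Import all_boot all_order all_algebra.
From mathcomp Require Import falgebra.
Set Implicit Arguments. Unset Strict Implicit. Unset Printing Implicit Defensive.
Import GRing.Theory.
Local Open Scope ring_scope.

Section Modules.
Variables (F : fieldType) (L : falgType F).

(* A finitely generated (= finite-dimensional) left L-module: an F-vector
   space F^n (row vectors) with a  acting by  v |-> v *m act a.
   Left-module law a.(b.v) = (ab).v means act (a*b) = act b *m act a. *)
Record module := Module {
  mdim : nat;
  act : L -> 'M[F]_mdim;
  act_lin : forall (c : F) (a b : L), act (c *: a + b) = c *: act a + act b;
  act_one : act 1 = 1%:M;
  act_mul : forall a b : L, act (a * b) = act b *m act a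
}.

(* L-module homomorphisms X -> Y, as matrices acting on row vectors;
   composition X -f-> Y -g-> Z is f *m g. *)
Definition hom (X Y : module) (f : 'M[F]_(mdim X, mdim Y)) : Prop :=
  forall a : L, act X a *m f = f *m act Y a.

Definition iso (X Y : module) : Prop :=
  exists (f : 'M[F]_(mdim X, mdim Y)) (g : 'M[F]_(mdim Y, mdim X)),
    [/\ hom f, hom g, f *m g = 1%:M & g *m f = 1%:M].

Definition mono m n (f : 'M[F]_(m, n)) : Prop := (kermx f == (0 : 'M[F]_m))%MS.
Definition epi m n (f : 'M[F]_(m, n)) : Prop := row_full f.

Definition is_kernel k x y (i : 'M[F]_(k, x)) (f : 'M[F]_(x, y)) : Prop :=
  mono i /\ (i == kermx f)%MS.
Definition is_cokernel x y c (f : 'M[F]_(x, y)) (p : 'M[F]_(y, c)) : Prop :=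
  epi p /\ (kermx p == f)%MS.

Definition short_exact x y z (f : 'M[F]_(x, y)) (g : 'M[F]_(y, z)) : Prop :=
  [/\ mono f, (f == kermx g)%MS & epi g].

(* A subcategory of mod L: a class of modules, closed under isomorphisms
   and containing the zero module (full subcategories are determined by
   their objects). *)
Definition subcat (S : module -> Prop) : Prop :=
  (forall X Y, iso X Y -> S X -> S Y) /\ (exists Z, mdim Z = 0%N /\ S Z).

Definition ext_closed (S : module -> Prop) : Prop :=
  forall (X Y Z : module) (f : 'M[F]_(mdim X, mdim Y)) (g : 'M[F]_(mdim Y, mdim Z)),
    hom f -> hom g -> short_exact f g -> S X -> S Z -> S Y.

Definition sub_closed (S : module -> Prop) : Prop :=
  forall (X Y : module) (i : 'M[F]_(mdim X, mdim Y)),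
    hom i -> mono i -> S Y -> S X.

Definition quot_closed (S : module -> Prop) : Prop :=
  forall (Y Z : module) (p : 'M[F]_(mdim Y, mdim Z)),
    hom p -> epi p -> S Y -> S Z.

Definition ker_closed (S : module -> Prop) : Prop :=
  forall (X Y : module) (f : 'M[F]_(mdim X, mdim Y)), hom f -> S X -> S Y ->
    exists (K : module) (i : 'M[F]_(mdim K, mdim X)), [/\ S K, hom i & is_kernel i f].

Definition coker_closed (S : module -> Prop) : Prop :=
  forall (X Y : module) (f : 'M[F]_(mdim X, mdim Y)), hom f -> S X -> S Y ->
    exists (C : module) (p : 'M[F]_(mdim Y, mdim C)), [/\ S C, hom p & is_cokernel f p].

Definition serre (S : module -> Prop) : Prop :=
  [/\ subcat S, ext_closed S, sub_closed S & quot_closed S].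

Definition wide (S : module -> Prop) : Prop :=
  [/\ subcat S, ext_closed S, ker_closed S & coker_closed S].

Definition torsion_class (T : module -> Prop) : Prop :=
  [/\ subcat T, ext_closed T & quot_closed T].

Definition torsionfree_class (T : module -> Prop) : Prop :=
  [/\ subcat T, ext_closed T & sub_closed T].

Definition left_approx (T : module -> Prop) (M : module) : Prop :=
  exists (T0 : module) (f : 'M[F]_(mdim M, mdim T0)),
    [/\ T T0, hom f &
     forall (T1 : module) (g : 'M[F]_(mdim M, mdim T1)), T T1 -> hom g ->
       exists h : 'M[F]_(mdim T0, mdim T1), hom h /\ g = f *m h].

Definition right_approx (T : module -> Prop) (M : module) : Prop :=
  exists (T0 : module) (f : 'M[F]_(mdim T0, mdim M)),
    [/\ T T0, hom f &
     forall (T1 : module) (g : 'M[F]_(mdim T1, mdim M)), T T1 -> hom g ->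
       exists h : 'M[F]_(mdim T1, mdim T0), hom h /\ g = h *m f].

Definition functorially_finite (T : module -> Prop) : Prop :=
  forall M : module, left_approx T M /\ right_approx T M.

Definition W_L (T : module -> Prop) (X : module) : Prop :=
  T X /\ forall (Y : module) (f : 'M[F]_(mdim Y, mdim X)), T Y -> hom f ->
    exists (K : module) (i : 'M[F]_(mdim K, mdim Y)), [/\ T K, hom i & is_kernel i f].

Definition W_R (T : module -> Prop) (X : module) : Prop :=
  T X /\ forall (Y : module) (f : 'M[F]_(mdim X, mdim Y)), T Y -> hom f ->
    exists (C : module) (p : 'M[F]_(mdim Y, mdim C)), [/\ T C, hom p & is_cokernel f p].

Definition left_finite_wide (W : module -> Prop) : Prop :=
  wide W /\ exists T, [/\ torsion_class T, functorially_finite T &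
                          forall X, W X <-> W_L T X].

Definition right_finite_wide (W : module -> Prop) : Prop :=
  wide W /\ exists T, [/\ torsionfree_class T, functorially_finite T &
                          forall X, W X <-> W_R T X].

End Modules.

(* Basic algebra: no two nonzero orthogonal idempotents e, e' are equivalent
   (equivalently L e and L e' are never isomorphic; i.e. in a decomposition of
   L into indecomposable projectives no summand is repeated). *)
Definition idempotent (R : nzRingType) (e : R) : Prop := e * e = e.
Definition basic_algebra (F : fieldType) (L : falgType F) : Prop :=
  forall e e' : L, idempotent e -> idempotent e' -> e != 0 -> e' != 0 ->
    e * e' = 0 -> e' * e = 0 ->
    ~ (exists a b : L, [/\ a = e * a * e', b = e' * b * e, a * b = e & b * a = e']).

(** A Serre subcategory S is simultaneously a torsion class and a torsion-free
    class, and kernels and cokernels of maps in S are sub- and quotient modules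
    of objects of S, so S is wide and W_L(S) = W_R(S) = S.  Since S is closed under finite direct sums,
    a map phi : M -> A into S of maximal rank is a left S-approximation: for any
    g : M -> T in S, the map (phi, g) : M -> A (+) T has no larger rank, so
    ker phi is contained in ker g and g factors through the image of phi.
    Dually, the image of a map A -> M from S of maximal rank is the largest
    submodule of M lying in S, which gives a right S-approximation. *)
From Pilot Require Import Defs.
From mathcomp Require Import all_boot all_order all_algebra.
From mathcomp Require Import falgebra boolp.
Set Implicit Arguments. Unset Strict Implicit. Unset Printing Implicit Defensive.
Import GRing.Theory.
Local Open Scope ring_scope.

Lemma ex_maxn_prop (P : nat -> Prop) (n : nat) :
  (exists m, P m) -> (forall m, P m -> (m <= n)%N) ->
  exists2 m, P m & forall k, P k -> (k <= m)%N.
Proof.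
move=> [m Pm] ubP.
have exPb : exists m, `[< P m >] by exists m; apply/asboolP.
have ubPb k : `[< P k >] -> (k <= n)%N by move/asboolP/ubP.
case: (ex_maxnP exPb ubPb) => k /asboolP Pk maxk.
by exists k => // j /asboolP /maxk.
Qed.

Lemma row_free_mono (F : fieldType) m n (f : 'M[F]_(m, n)) : row_free f -> mono f.
Proof. by rewrite /mono -kermx_eq0 -submx0 sub0mx andbT. Qed.

Lemma submx_of_rank_geq (F : fieldType) m1 m2 n (A : 'M[F]_(m1, n)) (B : 'M[F]_(m2, n)) :
  (A <= B)%MS -> (\rank B <= \rank A)%N -> (B <= A)%MS.
Proof. by move=> sAB leBA; have [_ <-] := mxrank_leqif_sup sAB; rewrite eqn_leq mxrankS. Qed.

Lemma kermx_row_mx_sub (F : fieldType) m n1 n2 (f : 'M[F]_(m, n1)) (g : 'M[F]_(m, n2)) :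
  (kermx (row_mx f g) <= kermx f)%MS /\ (kermx (row_mx f g) <= kermx g)%MS.
Proof.
rewrite !sub_kermx; have := mulmx_ker (row_mx f g).
by rewrite mul_mx_row -row_mx0 => /eq_row_mx [-> ->].
Qed.

Section ModuleConstructions.
Variables (F : fieldType) (L : falgType F).
Local Notation module := (module L).
Local Notation hom := (@Defs.hom F L _ _).

Definition stable (X : module) m (U : 'M[F]_(m, mdim X)) : Prop :=
  forall a, stablemx U (act X a).

Lemma hom_im_stable (X Y : module) (f : 'M_(mdim X, mdim Y)) :
  hom f -> stable f.
Proof. by move=> hf a; rewrite -hf submxMl. Qed.

Lemma hom_ker_stable (X Y : module) (f : 'M_(mdim X, mdim Y)) :
  hom f -> stable (kermx f).
Proof. by move=> hf a; rewrite sub_kermx -mulmxA hf mulmxA mulmx_ker mul0mx. Qed.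

Section Submodule.
Variables (X : module) (m : nat) (U : 'M[F]_(m, mdim X)).
Hypothesis U_stable : stable U.

Definition submod_act a : 'M[F]_(\rank U) :=
  row_base U *m act X a *m pinvmx (row_base U).

Lemma row_base_act_pinvK a :
  row_base U *m act X a *m pinvmx (row_base U) *m row_base U = row_base U *m act X a.
Proof.
by apply: mulmxKpV; rewrite !eq_row_base (submx_trans _ (U_stable a)) ?submxMr ?eq_row_base.
Qed.

Lemma submod_act_lin (c : F) (a b : L) :
  submod_act (c *: a + b) = c *: submod_act a + submod_act b.
Proof. by rewrite /submod_act act_lin mulmxDr mulmxDl -scalemxAr -scalemxAl. Qed.

Lemma submod_act_one : submod_act 1 = 1%:M.
Proof. by rewrite /submod_act act_one mulmx1 mulmxVp ?row_base_free. Qed.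

Lemma submod_act_mul a b : submod_act (a * b) = submod_act b *m submod_act a.
Proof.
by rewrite /submod_act act_mul mulmxA -{1}(row_base_act_pinvK b) 2!mulmxA.
Qed.

Definition submod : module :=
  Module submod_act_lin submod_act_one submod_act_mul.

Definition submod_incl : 'M[F]_(mdim submod, mdim X) := row_base U.

Lemma submod_incl_hom : hom submod_incl.
Proof. exact: row_base_act_pinvK. Qed.

End Submodule.

Section Quotient.
Variables (Y : module) (m : nat) (U : 'M[F]_(m, mdim Y)).
Hypothesis U_stable : stable U.

Definition quotmod_proj : 'M[F]_(mdim Y, \rank (cokermx U)) := col_base (cokermx U).

Lemma quotmod_proj_full : row_full quotmod_proj.
Proof. exact: col_base_full. Qed.

Lemma quotmod_proj_eq0 k (u : 'M[F]_(k, mdim Y)) : (u *m quotmod_proj == 0) = (u <= U)%MS.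
Proof.
rewrite submxE -[in RHS](mulmx_base (cokermx U)) mulmxA.
apply/eqP/eqP => [-> | uU]; first by rewrite mul0mx.
by apply: (row_free_inj (row_base_free (cokermx U))); rewrite uU mul0mx.
Qed.

Lemma quotmod_proj_ker : (kermx quotmod_proj == U)%MS.
Proof.
apply/andP; split; first by rewrite -quotmod_proj_eq0 mulmx_ker.
by rewrite sub_kermx quotmod_proj_eq0.
Qed.

Definition quotmod_act a : 'M[F]_(\rank (cokermx U)) :=
  pinvmx quotmod_proj *m act Y a *m quotmod_proj.

Lemma proj_pinv_act a :
  quotmod_proj *m pinvmx quotmod_proj *m act Y a *m quotmod_proj = act Y a *m quotmod_proj.
Proof.
set p := quotmod_proj; set q := pinvmx p.
have pq_ker : (p *m q - 1%:M <= U)%MS.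
  by rewrite -quotmod_proj_eq0 mulmxBl mul1mx -mulmxA mulVpmx ?quotmod_proj_full ?mulmx1 ?subrr.
apply/eqP; rewrite -subr_eq0 -{2}[act Y a]mul1mx -mulmxBl -mulmxBl quotmod_proj_eq0.
exact: submx_trans (submxMr _ pq_ker) (U_stable a).
Qed.

Lemma quotmod_act_lin (c : F) (a b : L) :
  quotmod_act (c *: a + b) = c *: quotmod_act a + quotmod_act b.
Proof. by rewrite /quotmod_act act_lin mulmxDr mulmxDl -scalemxAr -scalemxAl. Qed.

Lemma quotmod_act_one : quotmod_act 1 = 1%:M.
Proof. by rewrite /quotmod_act act_one mulmx1 mulVpmx ?quotmod_proj_full. Qed.

Lemma quotmod_act_mul a b : quotmod_act (a * b) = quotmod_act b *m quotmod_act a.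
Proof.
have proj_act : quotmod_proj *m (pinvmx quotmod_proj *m act Y a *m quotmod_proj)
                = act Y a *m quotmod_proj by rewrite -proj_pinv_act !mulmxA.
by rewrite /quotmod_act act_mul -(mulmxA (_ *m act Y b)) proj_act !mulmxA.
Qed.

Definition quotmod : module :=
  Module quotmod_act_lin quotmod_act_one quotmod_act_mul.

Lemma quotmod_proj_hom : hom (quotmod_proj : 'M_(mdim Y, mdim quotmod)).
Proof. by move=> a; rewrite -proj_pinv_act /= /quotmod_act !mulmxA. Qed.

End Quotient.

Lemma hom0 (X Y : module) : hom (0 : 'M_(mdim X, mdim Y)).
Proof. by move=> a; rewrite mulmx0 mul0mx. Qed.

Lemma hom1 (X : module) : hom (1%:M : 'M_(mdim X)).
Proof. by move=> a; rewrite mulmx1 mul1mx. Qed.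

Section DirectSum.
Variables (A B : module).

Definition dsum_act a : 'M[F]_(mdim A + mdim B) := block_mx (act A a) 0 0 (act B a).

Lemma dsum_act_lin (c : F) (a b : L) : dsum_act (c *: a + b) = c *: dsum_act a + dsum_act b.
Proof. by rewrite /dsum_act scale_block_mx add_block_mx !scaler0 !addr0 !act_lin. Qed.

Lemma dsum_act_one : dsum_act 1 = 1%:M.
Proof. by rewrite /dsum_act !act_one scalar_mx_block. Qed.

Lemma dsum_act_mul a b : dsum_act (a * b) = dsum_act b *m dsum_act a.
Proof. by rewrite /dsum_act mulmx_block !act_mul !mulmx0 !mul0mx !addr0 !add0r. Qed.

Definition dsum : module := Module dsum_act_lin dsum_act_one dsum_act_mul.

Lemma hom_row_mx (M : module) (f : 'M_(mdim M, mdim A)) (g : 'M_(mdim M, mdim B)) :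
  hom f -> hom g -> hom (row_mx f g : 'M_(mdim M, mdim dsum)).
Proof.
move=> hf hg a; rewrite /= /dsum_act mul_row_block mul_mx_row !mulmx0 addr0 add0r.
by rewrite hf hg.
Qed.

Lemma hom_col_mx (M : module) (f : 'M_(mdim A, mdim M)) (g : 'M_(mdim B, mdim M)) :
  hom f -> hom g -> hom (col_mx f g : 'M_(mdim dsum, mdim M)).
Proof.
move=> hf hg a; rewrite /= /dsum_act mul_block_col mul_col_mx !mul0mx addr0 add0r.
by rewrite hf hg.
Qed.

Lemma dsum_short_exact :
  short_exact (row_mx 1%:M 0 : 'M[F]_(mdim A, mdim A + mdim B))
              (col_mx 0 1%:M : 'M[F]_(mdim A + mdim B, mdim B)).
Proof.
split.
- rewrite /mono; have := mulmx_ker (row_mx 1%:M 0 : 'M[F]_(mdim A, mdim A + mdim B)).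
  by rewrite mul_mx_row mulmx1 mulmx0 -[RHS]row_mx0 => /eq_row_mx [-> _]; rewrite sub0mx.
- apply/andP; split.
    by rewrite sub_kermx mul_row_col mulmx0 mul0mx addr0.
  set K := kermx _; have := mulmx_ker (col_mx 0 1%:M : 'M[F]_(mdim A + mdim B, mdim B)).
  rewrite -/K -[K]hsubmxK mul_row_col mulmx0 add0r mulmx1 => ->.
  have -> : row_mx (lsubmx K) 0 = lsubmx K *m (row_mx 1%:M 0 : 'M[F]_(_, _ + mdim B)).
    by rewrite mul_mx_row mulmx1 mulmx0.
  exact: submxMl.
- apply/row_fullP; exists (row_mx 0 1%:M).
  by rewrite mul_row_col mulmx0 mul1mx add0r.
Qed.

End DirectSum.

Lemma hom_factor_mono (I M T : module) (i : 'M_(mdim I, mdim M)) (g : 'M_(mdim T, mdim M)) :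
  hom i -> row_free i -> hom g -> (g <= i)%MS ->
  exists h : 'M_(mdim T, mdim I), hom h /\ g = h *m i.
Proof.
move=> hi ifree hg gi; exists (g *m pinvmx i); split; last by rewrite mulmxKpV.
move=> a; have actI : act I a = i *m act M a *m pinvmx i.
  by rewrite -hi -mulmxA mulmxVp // mulmx1.
by rewrite actI mulmxA hg [RHS]mulmxA [in RHS]mulmxA mulmxKpV.
Qed.

Lemma hom_factor_epi (M I T : module) (e : 'M_(mdim M, mdim I)) (g : 'M_(mdim M, mdim T)) :
  hom e -> row_full e -> hom g -> (kermx e <= kermx g)%MS ->
  exists h : 'M_(mdim I, mdim T), hom h /\ g = e *m h.
Proof.
move=> he efull hg keg; set q := pinvmx e.
have eqg : e *m (q *m g) = g.
  apply/eqP; rewrite mulmxA -subr_eq0 -{2}[g]mul1mx -mulmxBl -sub_kermx (submx_trans _ keg) //.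
  by rewrite sub_kermx mulmxBl mul1mx -mulmxA mulVpmx // mulmx1 subrr.
exists (q *m g); split; last by rewrite eqg.
move=> a; have actI : act I a = q *m act M a *m e.
  by rewrite -mulmxA he mulmxA mulVpmx // mul1mx.
by rewrite actI -[LHS]mulmxA eqg -mulmxA hg mulmxA.
Qed.

Lemma hom_epi_mono_factor (A M : module) (phi : 'M_(mdim A, mdim M)) : hom phi ->
  exists (I : module) (e : 'M_(mdim A, mdim I)) (i : 'M_(mdim I, mdim M)),
    [/\ hom e, hom i, row_full e, row_free i & phi = e *m i].
Proof.
move=> hphi; have hi := submod_incl_hom (hom_im_stable hphi).
have phi_im : (phi <= row_base phi)%MS by rewrite eq_row_base.
have [e [he phiE]] := hom_factor_mono hi (row_base_free phi) hphi phi_im.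
exists (submod (hom_im_stable hphi)), e, (row_base phi); split=> //; last exact: row_base_free.
by rewrite /row_full eqn_leq rank_leq_col /= {1}phiE mxrankM_maxl.
Qed.

End ModuleConstructions.

Section Approximations.
Variables (F : fieldType) (L : falgType F).
Local Notation module := (module L).
Local Notation hom := (@Defs.hom F L _ _).
Variable S : module -> Prop.
Hypotheses (S_subcat : subcat S) (S_ext : ext_closed S).
Hypotheses (S_sub : sub_closed S) (S_quot : quot_closed S).

Lemma dsum_closed (A B : module) : S A -> S B -> S (dsum A B).
Proof.
exact: S_ext (hom_row_mx (hom1 A) (hom0 A B)) (hom_col_mx (hom0 A B) (hom1 B))
             (dsum_short_exact A B).
Qed.

Lemma ex_hom_from_max_rank (M : module) :
  exists (A : module) (phi : 'M_(mdim M, mdim A)), [/\ S A, hom phi &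
    forall (B : module) (psi : 'M_(mdim M, mdim B)), S B -> hom psi -> (\rank psi <= \rank phi)%N].
Proof.
pose P r := exists (A : module) (phi : 'M_(mdim M, mdim A)), [/\ S A, hom phi & \rank phi = r].
have [r [A [phi [SA hphi <-]]] maxr] : exists2 r, P r & forall k, P k -> (k <= r)%N.
  apply: (@ex_maxn_prop _ (mdim M)); last by move=> r [A [phi [_ _ <-]]]; apply: rank_leq_row.
  have [Z [_ SZ]] := S_subcat.2.
  by exists 0%N, Z, 0; split; [| exact: hom0 | exact: mxrank0].
by exists A, phi; split => // B psi SB hpsi; apply: maxr; exists B, psi.
Qed.

Lemma ex_hom_to_max_rank (M : module) :
  exists (A : module) (phi : 'M_(mdim A, mdim M)), [/\ S A, hom phi &
    forall (B : module) (psi : 'M_(mdim B, mdim M)), S B -> hom psi -> (\rank psi <= \rank phi)%N].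
Proof.
pose P r := exists (A : module) (phi : 'M_(mdim A, mdim M)), [/\ S A, hom phi & \rank phi = r].
have [r [A [phi [SA hphi <-]]] maxr] : exists2 r, P r & forall k, P k -> (k <= r)%N.
  apply: (@ex_maxn_prop _ (mdim M)); last by move=> r [A [phi [_ _ <-]]]; apply: rank_leq_col.
  have [Z [_ SZ]] := S_subcat.2.
  by exists 0%N, Z, 0; split; [| exact: hom0 | exact: mxrank0].
by exists A, phi; split => // B psi SB hpsi; apply: maxr; exists B, psi.
Qed.

Lemma ext_sub_closed_left_approx (M : module) : left_approx S M.
Proof.
have [A [phi [SA hphi maxphi]]] := ex_hom_from_max_rank M.
have [I [e [i [he hi efull ifree phiE]]]] := hom_epi_mono_factor hphi.
exists I, e; split => //; first exact: S_sub hi (row_free_mono ifree) SA.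
move=> T g ST hg; apply: (hom_factor_epi he efull hg).
have [ker_phi ker_g] := kermx_row_mx_sub phi g.
have phi_psi : (kermx phi <= kermx (row_mx phi g))%MS.
  apply: submx_of_rank_geq ker_phi _; rewrite !mxrank_ker leq_sub2l //.
  exact: maxphi (dsum_closed SA ST) (hom_row_mx hphi hg).
have e_phi : (kermx e <= kermx phi)%MS by rewrite sub_kermx phiE mulmxA mulmx_ker mul0mx.
exact: submx_trans e_phi (submx_trans phi_psi ker_g).
Qed.

Lemma ext_quot_closed_right_approx (M : module) : right_approx S M.
Proof.
have [A [phi [SA hphi maxphi]]] := ex_hom_to_max_rank M.
have [I [e [i [he hi efull ifree phiE]]]] := hom_epi_mono_factor hphi.
exists I, i; split => //; first exact: S_quot he efull SA.
move=> T g ST hg; apply: (hom_factor_mono hi ifree hg).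
have psi_phi : (col_mx phi g <= phi)%MS.
  apply: submx_of_rank_geq; first by rewrite -addsmxE addsmxSl.
  exact: maxphi (dsum_closed SA ST) (hom_col_mx hphi hg).
have g_phi : (g <= phi)%MS by move: psi_phi; rewrite col_mx_sub => /andP [].
by apply: submx_trans g_phi _; rewrite phiE submxMl.
Qed.

End Approximations.

Section SerreSubcategories.
Variables (F : fieldType) (L : falgType F).
Local Notation module := (module L).
Variable S : module -> Prop.

Lemma sub_closed_ker_closed : sub_closed S -> ker_closed S.
Proof.
move=> S_sub X Y f hf SX _; have Kstable := hom_ker_stable hf.
have incl_mono : mono (submod_incl Kstable) := row_free_mono (row_base_free _).
exists (submod Kstable), (submod_incl Kstable); split.
- exact: S_sub (submod_incl_hom Kstable) incl_mono SX.
- exact: submod_incl_hom.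
- by split=> //; apply/eqmxP; apply: eq_row_base.
Qed.

Lemma quot_closed_coker_closed : quot_closed S -> coker_closed S.
Proof.
move=> S_quot X Y f hf _ SY; have Istable := hom_im_stable hf.
exists (quotmod Istable), (quotmod_proj f); split.
- exact: S_quot (quotmod_proj_hom Istable) (quotmod_proj_full f) SY.
- exact: quotmod_proj_hom.
- by split; [exact: quotmod_proj_full | exact: quotmod_proj_ker].
Qed.

Lemma ker_closed_W_L : ker_closed S -> forall X, S X <-> W_L S X.
Proof. by move=> S_ker X; split=> [SX | []//]; split=> // Y f SY hf; apply: S_ker. Qed.

Lemma coker_closed_W_R : coker_closed S -> forall X, S X <-> W_R S X.
Proof. by move=> S_coker X; split=> [SX | []//]; split=> // Y f SY hf; apply: S_coker. Qed.

Hypothesis S_serre : serre S.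

Lemma serre_wide : wide S.
Proof.
case: S_serre => S_subcat S_ext S_sub S_quot; split=> //.
  exact: sub_closed_ker_closed.
exact: quot_closed_coker_closed.
Qed.

Lemma serre_torsion_class : torsion_class S.
Proof. by case: S_serre. Qed.

Lemma serre_torsionfree_class : torsionfree_class S.
Proof. by case: S_serre. Qed.

Lemma serre_functorially_finite : functorially_finite S.
Proof.
case: S_serre => S_subcat S_ext S_sub S_quot M.
by split; [exact: ext_sub_closed_left_approx | exact: ext_quot_closed_right_approx].
Qed.

End SerreSubcategories.


Theorem corollary3p8 (F : fieldType) (L : falgType F) (S : module L -> Prop) :
  basic_algebra L -> serre S -> left_finite_wide S /\ right_finite_wide S.
Proof.
move=> _ S_serre; have [_ _ S_sub S_quot] := S_serre.
split; split; try exact: serre_wide; exists S; split.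
- exact: serre_torsion_class.
- exact: serre_functorially_finite.
- exact: ker_closed_W_L (sub_closed_ker_closed S_sub).
- exact: serre_torsionfree_class.
- exact: serre_functorially_finite.
- exact: coker_closed_W_R (quot_closed_coker_closed S_quot).
Qed.
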